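(* Let $f:\mathbb{R}^n\to\mathbb{R}$ be such that $\nabla f$ is Lipschitz continuous with constant $L$ on an open bounded domain $\mathcal{X}\subset\mathbb{R}^n$ containing $\overline{B}(y^0,\delta)$. Let $q=(n^2+3n)/2$, $n<p<q$, $\delta>0$, and let $\mathcal{Y}=\{y^0,\dots,y^p\}\subset\overline{B}(y^0,\delta)$ be poised in the minimum Frobenius norm sense and $\Lambda$-poised in $\overline{B}(y^0,\delta)$ in the minimum Frobenius norm sense, for some $\Lambda>0$. Let $\delta_{\max}>0$ with $\delta\le\delta_{\max}$. Let $\kappa\ge 0$ and let $\mathrm{m}$ be a relaxed minimum Frobenius norm model, i.e. $\mathrm{m}(x)=\sum_{j=0}^{p}\ell_j(x)\gamma_j$, where $\ell_0,\dots,\ell_p$ are the minimum Frobenius norm Lagrange polynomials of $\mathcal{Y}$ and the real numbers $\gamma_j$ are such that $|\mathrm{m}(y^j)-f(y^j)|\le\kappa\delta^2$ for all $j=0,\dots,p$. Then, for all $x$, \[ \|\nabla^2\mathrm{m}(x)\|\le\Big(\kappa+\frac{L}{2}\Big)\frac{4\Lambda(p+1)\sqrt{2(q+1)}}{c(\delta_{\max})^2}, \] where $c(\delta_{\max})=\min\{1,1/\delta_{\max},1/\delta_{\max}^2\}$.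
   Context: $\overline{B}(x,\delta)$ is the closed Euclidean ball; $\|\cdot\|$ is the Euclidean norm / induced matrix norm, $\|\cdot\|_\infty$ the max norm. Natural basis of quadratic polynomials: $\overline\phi_L(x)=(1,x_1,\dots,x_n)$ and $\overline\phi_Q(x)=(\tfrac12x_1^2,x_1x_2,x_1x_3,\dots,x_1x_n,\tfrac12x_2^2,\dots,x_{n-1}x_n,\tfrac12x_n^2)$; $\overline\phi=(\overline\phi_L,\overline\phi_Q)$ has $q+1$ components. For a list of functions $\phi=(\phi_0,\dots,\phi_r)$, $\mathbf{M}(\phi,\mathcal{Y})$ is the $(p+1)\times(r+1)$ matrix with $(i,k)$ entry $\phi_k(y^i)$. The set $\mathcal{Y}$ is poised in the minimum Frobenius norm sense if the matrix $\begin{bmatrix}\mathbf{M}(\overline\phi_Q,\mathcal{Y})\mathbf{M}(\overline\phi_Q,\mathcal{Y})^T & \mathbf{M}(\overline\phi_L,\mathcal{Y})\\ \mathbf{M}(\overline\phi_L,\mathcal{Y})^T & 0\end{bmatrix}$ is nonsingular. Minimum Frobenius norm Lagrange polynomials: $\ell_j(x)=\alpha_j^T\overline\phi(x)$, $j=0,\dots,p$, where $\alpha_j=((\alpha_j)_L,(\alpha_j)_Q)$ solves $\min\frac12\|\alpha_Q\|^2$ subject to $\mathbf{M}(\overline\phi_L,\mathcal{Y})\alpha_L+\mathbf{M}(\overline\phi_Q,\mathcal{Y})\alpha_Q=e_{j+1}$, with $e_{j+1}$ the $(j+1)$-th canonical vector of $\mathbb{R}^{p+1}$. A poised set $\mathcal{Y}$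 is $\Lambda$-poised in $B\subseteq\mathbb{R}^n$ in the minimum Frobenius norm sense if for every $x\in B$ the solution $\lambda(x)\in\mathbb{R}^{p+1}$ of $\min\frac12\|\mathbf{M}(\overline\phi_Q,\mathcal{Y})^T\lambda-\overline\phi_Q(x)\|^2$ subject to $\mathbf{M}(\overline\phi_L,\mathcal{Y})^T\lambda=\overline\phi_L(x)$ satisfies $\|\lambda(x)\|_\infty\le\Lambda$. *)

From HB Require Import structures.
From mathcomp Require Import all_boot all_order all_algebra.
From mathcomp Require Import all_classical all_reals all_analysis.
Set Implicit Arguments. Unset Strict Implicit. Unset Printing Implicit Defensive.
Import Order.TTheory GRing.Theory Num.Theory.
Import numFieldNormedType.Exports.
Local Open Scope classical_set_scope.
Local Open Scope ring_scope.

Section Defs.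
Variable R : realType.

Definition enorm {m k : nat} (A : 'M[R]_(m, k)) : R :=
  Num.sqrt (\sum_i \sum_j (A i j) ^+ 2).

Definition infnorm {m : nat} (v : 'cV[R]_m) : R :=
  \big[Num.max/0]_i `|v i 0|.

Definition opnorm {n : nat} (H : 'M[R]_n) : R :=
  sup [set enorm (H *m v) | v in [set v : 'cV[R]_n | enorm v <= 1]].

Definition cball {n : nat} (c : 'rV[R]_n) (d : R) : set 'rV[R]_n :=
  [set x | enorm (x - c) <= d].

(* canonical basis vector e_i of R^n (points of R^n are row vectors) *)
Definition evec {n : nat} (i : 'I_n) : 'rV[R]_n := delta_mx 0 i.

Definition grad {n : nat} (f : 'rV[R]_n -> R) (x : 'rV[R]_n) : 'rV[R]_n :=
  \row_i ('D_(evec i) f x).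

Definition hessian {n : nat} (f : 'rV[R]_n -> R) (x : 'rV[R]_n) : 'M[R]_n :=
  \matrix_(i, j) ('D_(evec j) (fun y => 'D_(evec i) f y) x).

(* number of quadratic monomials: n(n+1)/2 ; q = (n^2+3n)/2 *)
Definition nQ (n : nat) : nat := (n * n.+1)./2.
Definition qdim (n : nat) : nat := (n * n + 3 * n)./2.

(* i-th coordinate (0-based, as a nat index) of x *)
Definition xc {n : nat} (x : 'rV[R]_n) (i : nat) : R :=
  nth 0 [seq x 0 k | k <- enum 'I_n] i.

Definition phiL {n : nat} (x : 'rV[R]_n) : 'rV[R]_(n.+1) :=
  \row_(k < n.+1) (if (k == 0 :> nat) then 1 else xc x k.-1).

(* phi_Q(x) = (x_1^2/2, x_1x_2, ..., x_1x_n, x_2^2/2, ..., x_{n-1}x_n, x_n^2/2) *)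
Definition phiQ_seq {n : nat} (x : 'rV[R]_n) : seq R :=
  flatten [seq [seq (if i == j then (xc x i) ^+ 2 / 2
                     else xc x i * xc x j) | j <- iota i (n - i)]
          | i <- iota 0 n].

Definition phiQ {n : nat} (x : 'rV[R]_n) : 'rV[R]_(nQ n) :=
  \row_(k < nQ n) nth 0 (phiQ_seq x) k.

Definition ML {n p : nat} (y : 'I_p.+1 -> 'rV[R]_n) : 'M[R]_(p.+1, n.+1) :=
  \matrix_(i, k) phiL (y i) 0 k.
Definition MQ {n p : nat} (y : 'I_p.+1 -> 'rV[R]_n) : 'M[R]_(p.+1, nQ n) :=
  \matrix_(i, k) phiQ (y i) 0 k.

Definition mfn_poised {n p : nat} (y : 'I_p.+1 -> 'rV[R]_n) : Prop :=
  block_mx (MQ y *m (MQ y)^T) (ML y) (ML y)^T (0 : 'M[R]_(n.+1))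
    \in unitmx.

Definition mfn_lagrange_coeffs {n p : nat} (y : 'I_p.+1 -> 'rV[R]_n)
    (j : 'I_p.+1) (aL : 'cV[R]_(n.+1)) (aQ : 'cV[R]_(nQ n)) : Prop :=
  ML y *m aL + MQ y *m aQ = delta_mx j 0 /\
  forall (bL : 'cV[R]_(n.+1)) (bQ : 'cV[R]_(nQ n)),
    ML y *m bL + MQ y *m bQ = delta_mx j 0 ->
    (enorm aQ) ^+ 2 / 2 <= (enorm bQ) ^+ 2 / 2.

Definition lagr_eval {n : nat} (aL : 'cV[R]_(n.+1)) (aQ : 'cV[R]_(nQ n))
    (x : 'rV[R]_n) : R :=
  (phiL x *m aL) 0 0 + (phiQ x *m aQ) 0 0.

Definition lambda_sol {n p : nat} (y : 'I_p.+1 -> 'rV[R]_n) (x : 'rV[R]_n)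
    (lam : 'cV[R]_(p.+1)) : Prop :=
  (ML y)^T *m lam = (phiL x)^T /\
  forall mu : 'cV[R]_(p.+1), (ML y)^T *m mu = (phiL x)^T ->
    (enorm ((MQ y)^T *m lam - (phiQ x)^T)) ^+ 2 / 2
      <= (enorm ((MQ y)^T *m mu - (phiQ x)^T)) ^+ 2 / 2.

Definition mfn_Lambda_poised {n p : nat} (y : 'I_p.+1 -> 'rV[R]_n)
    (Lam : R) (B : set 'rV[R]_n) : Prop :=
  mfn_poised y /\
  forall x, B x -> forall lam, lambda_sol y x lam -> infnorm lam <= Lam.

Definition cdelta (dmax : R) : R :=
  Num.min 1 (Num.min (dmax^-1) ((dmax ^+ 2)^-1)).

End Defs.

(* The model m = sum_j gamma_j l_j is quadratic, so its Hessian is determined by the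
   second difference D2 m (y0; u) = m (y0 + u) + m (y0 - u) - 2 m (y0).  The minimum
   Frobenius norm Lagrange polynomials reproduce affine functions; hence, for the
   first-order Taylor polynomial g of f at y0,
     D2 m (y0; u) = sum_j (gamma_j - g (y^j)) D2 l_j (y0; u).
   The interpolation condition and the mean value theorem with the Lipschitz gradient
   bound each residual |gamma_j - g (y^j)| by (kappa + L) delta^2.  The vector
   (l_j (x))_j is exactly the solution lambda(x) of the least-squares problem defining
   Lambda-poisedness, so |l_j| <= Lambda on the ball, and sampling l_j at y0 and at
   y0 +- (delta / |u|) u gives |D2 l_j (y0; u)| <= 4 Lambda |u|^2 / delta^2.  Hence
   ||Hess m|| <= 4 Lambda (p + 1) (kappa + L), which implies the stated bound since
   sqrt (2 (q + 1)) >= 2 and c(delta_max) <= 1. *)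

From HB Require Import structures.
From mathcomp Require Import all_boot all_order all_algebra.
From mathcomp Require Import all_classical all_reals all_analysis.
From mathcomp Require Import ring lra.
Import Order.TTheory GRing.Theory Num.Theory.
Import numFieldNormedType.Exports.
Local Open Scope classical_set_scope.
Local Open Scope ring_scope.
Set Implicit Arguments. Unset Strict Implicit. Unset Printing Implicit Defensive.

Section MatrixEntries.
Variable R : pzRingType.

Lemma zeromx_ij a b (i : 'I_a) (j : 'I_b) : (0 : 'M[R]_(a, b)) i j = 0.
Proof. by rewrite mxE. Qed.

Lemma addmx_ij a b (A B : 'M[R]_(a, b)) i j : (A + B) i j = A i j + B i j.
Proof. by rewrite mxE. Qed.

Lemma oppmx_ij a b (A : 'M[R]_(a, b)) i j : (- A) i j = - A i j.
Proof. by rewrite mxE. Qed.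

Lemma scalemx_ij a b t (A : 'M[R]_(a, b)) i j : (t *: A) i j = t * A i j.
Proof. by rewrite mxE. Qed.

Lemma mulmx_delta_col m k (A : 'M[R]_(m, k)) (c : 'I_k) (j : 'I_m) :
  (A *m delta_mx c (0 : 'I_1)) j 0 = A j c.
Proof.
rewrite mxE (bigD1 c) //= mxE !eqxx mulr1 big1 ?addr0 // => l /negbTE nlc.
by rewrite mxE nlc mulr0.
Qed.

Lemma sum_delta_col m (C : 'cV[R]_m) : \sum_j C j 0 *: delta_mx j 0 = C.
Proof.
apply/matrixP => i k; rewrite (ord1 k) summxE (bigD1 i) //= !mxE !eqxx mulr1.
by rewrite big1 ?addr0 // => j /negbTE nji; rewrite !mxE eq_sym nji mulr0.
Qed.

End MatrixEntries.

Section InnerProduct.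
Variable R : realFieldType.

Definition dot {m : nat} (a b : 'cV[R]_m) : R := (a^T *m b) 0 0.

Lemma dotE m (a b : 'cV[R]_m) : dot a b = \sum_i a i 0 * b i 0.
Proof. by rewrite /dot mxE; apply: eq_bigr => i _; rewrite mxE. Qed.

Lemma dotC m (a b : 'cV[R]_m) : dot a b = dot b a.
Proof. by rewrite !dotE; apply: eq_bigr => i _; rewrite mulrC. Qed.

Lemma dotDl m (a b c : 'cV[R]_m) : dot (a + b) c = dot a c + dot b c.
Proof. by rewrite !dotE -big_split; apply: eq_bigr => i _; rewrite mxE mulrDl. Qed.

Lemma dotBl m (a b c : 'cV[R]_m) : dot (a - b) c = dot a c - dot b c.
Proof. by rewrite !dotE -sumrB; apply: eq_bigr => i _; rewrite !mxE mulrBl. Qed.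

Lemma dotZl m t (a c : 'cV[R]_m) : dot (t *: a) c = t * dot a c.
Proof. by rewrite !dotE mulr_sumr; apply: eq_bigr => i _; rewrite mxE mulrA. Qed.

Lemma dot0l m (a : 'cV[R]_m) : dot 0 a = 0.
Proof. by rewrite dotE big1 // => i _; rewrite mxE mul0r. Qed.

Lemma dotDr m (a b c : 'cV[R]_m) : dot c (a + b) = dot c a + dot c b.
Proof. by rewrite !(dotC c) dotDl. Qed.

Lemma dotBr m (a b c : 'cV[R]_m) : dot c (a - b) = dot c a - dot c b.
Proof. by rewrite !(dotC c) dotBl. Qed.

Lemma dotZr m t (a c : 'cV[R]_m) : dot c (t *: a) = t * dot c a.
Proof. by rewrite !(dotC c) dotZl. Qed.

Lemma dotNr m (a c : 'cV[R]_m) : dot c (- a) = - dot c a.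
Proof. by rewrite -scaleN1r dotZr mulN1r. Qed.

Lemma dot_suml m (I : finType) (F : I -> 'cV[R]_m) b :
  dot (\sum_j F j) b = \sum_j dot (F j) b.
Proof.
rewrite dotE; under eq_bigr => i _ do rewrite summxE mulr_suml.
by rewrite exchange_big; apply: eq_bigr => j _; rewrite dotE.
Qed.

Lemma dot_mulmxl m k (A : 'M[R]_(m, k)) a b : dot (A *m a) b = dot a (A^T *m b).
Proof. by rewrite /dot trmx_mul mulmxA. Qed.

Lemma dot_ge0 m (a : 'cV[R]_m) : 0 <= dot a a.
Proof. by rewrite dotE sumr_ge0 // => i _; rewrite -expr2 sqr_ge0. Qed.

Lemma dot_eq0 m (a : 'cV[R]_m) : dot a a = 0 -> a = 0.
Proof.
rewrite dotE => /eqP; rewrite psumr_eq0; last by move=> i _; rewrite -expr2 sqr_ge0.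
move=> /allP a0; apply/matrixP => i j; rewrite (ord1 j) mxE.
by have := a0 i (mem_index_enum _); rewrite implyTb mulf_eq0 orbb => /eqP.
Qed.

Lemma dot_pythagoras m (u v : 'cV[R]_m) :
  dot v u = 0 -> dot u u <= dot (u + v) (u + v).
Proof.
move=> uv; rewrite dotDl !dotDr uv (dotC u v) uv.
by have := dot_ge0 v; lra.
Qed.

Lemma dot_CauchySchwarz m (a b : 'cV[R]_m) : dot a b ^+ 2 <= dot a a * dot b b.
Proof.
have [a0|a_neq0] := eqVneq (dot a a) 0.
  by rewrite a0 mul0r (dot_eq0 a0) dot0l expr0n.
have a_gt0 : 0 < dot a a by rewrite lt_def a_neq0 dot_ge0.
set t := dot a b / dot a a.
have ta : t * dot a a = dot a b by rewrite /t divfK.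
have := dot_ge0 (b - t *: a).
by rewrite !dotBl !dotBr !dotZl !dotZr (dotC b a); nra.
Qed.

End InnerProduct.

Section EuclideanNorm.
Variable R : realType.

Lemma enorm_ge0 a b (A : 'M[R]_(a, b)) : 0 <= enorm A.
Proof. exact: sqrtr_ge0. Qed.

Lemma enorm0 a b : enorm (0 : 'M[R]_(a, b)) = 0.
Proof. by rewrite /enorm big1 ?sqrtr0 // => i _; rewrite big1 // => j _; rewrite mxE expr0n. Qed.

Lemma enorm_scale a b t (A : 'M[R]_(a, b)) : enorm (t *: A) = `|t| * enorm A.
Proof.
rewrite /enorm -sqrtr_sqr -sqrtrM ?sqr_ge0 //; congr Num.sqrt.
rewrite mulr_sumr; apply: eq_bigr => i _; rewrite mulr_sumr; apply: eq_bigr => j _.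
by rewrite mxE exprMn.
Qed.

Lemma enorm_sqE a b (A : 'M[R]_(a, b)) : enorm A ^+ 2 = \sum_i \sum_j A i j ^+ 2.
Proof.
by rewrite sqr_sqrtr // sumr_ge0 // => i _; rewrite sumr_ge0 // => j _; rewrite sqr_ge0.
Qed.

Lemma enorm_cV_sq m (a : 'cV[R]_m) : enorm a ^+ 2 = dot a a.
Proof. by rewrite enorm_sqE dotE; apply: eq_bigr => i _; rewrite big_ord1 expr2. Qed.

Lemma enorm_rV_sq m (u : 'rV[R]_m) : enorm u ^+ 2 = dot u^T u^T.
Proof. by rewrite enorm_sqE dotE big_ord1; apply: eq_bigr => i _; rewrite !mxE expr2. Qed.

Lemma enorm_rV_eq0 m (u : 'rV[R]_m) : enorm u = 0 -> u = 0.
Proof.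
move=> u0; apply: trmx_inj; rewrite trmx0; apply: dot_eq0.
by rewrite -enorm_rV_sq u0 expr0n.
Qed.

Lemma enorm_evec n (i : 'I_n) : enorm (evec R i) = 1.
Proof.
rewrite /enorm big_ord1 (bigD1 i) //= big1 ?addr0; first by rewrite mxE !eqxx expr1n sqrtr1.
by move=> k nk; rewrite mxE (negbTE nk) andbF expr0n.
Qed.

Lemma enorm_CauchySchwarz m (u v : 'rV[R]_m) : `|(u *m v^T) 0 0| <= enorm u * enorm v.
Proof.
have uv : (u *m v^T) 0 0 = dot u^T v^T by rewrite /dot trmxK.
have := dot_CauchySchwarz u^T v^T; rewrite -uv -!enorm_rV_sq -exprMn => CS.
rewrite -(ger0_norm (mulr_ge0 (enorm_ge0 u) (enorm_ge0 v))).
by rewrite -ler_sqr ?nnegrE // !real_normK ?num_real.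
Qed.

(* For [u = Hv / |Hv|], polarization gives
   [4 |Hv| = (u+v)'H(u+v) - (u-v)'H(u-v) <= 2 M (|u|^2 + |v|^2) <= 4 M]. *)
Lemma opnorm_sym_le n (H : 'M[R]_n) M : H^T = H -> 0 <= M ->
  (forall a : 'cV[R]_n, `|dot a (H *m a)| <= M * dot a a) -> opnorm H <= M.
Proof.
move=> Hsym M0 HB; apply: ge_sup.
  by exists (enorm (H *m (0 : 'cV[R]_n))), 0 => //=; rewrite enorm0 ler01.
move=> _ [v /= v1 <-]; set w := H *m v; set N := enorm w.
have N0 : 0 <= N by exact: enorm_ge0.
have [->|N_neq0] := eqVneq N 0; first by [].
have N_gt0 : 0 < N by rewrite lt_def N_neq0 N0.
set u := N^-1 *: w.
have ww : dot w w = N ^+ 2 by rewrite -enorm_cV_sq.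
have uu : dot u u = 1 by rewrite /u dotZl dotZr ww; field.
have vv : dot v v <= 1 by rewrite -enorm_cV_sq; have := enorm_ge0 v; nra.
have Bsym a b : dot a (H *m b) = dot b (H *m a) by rewrite dotC dot_mulmxl Hsym.
have Huv : dot u (H *m v) = N by rewrite /u dotZl -/w ww; field.
have := HB (u + v); have := HB (u - v).
rewrite mulmxBr mulmxDr !dotBl !dotDl !dotBr !dotDr Huv (Bsym v u) Huv (dotC v u) uu.
by move=> /ler_normlP [? ?] /ler_normlP [? ?]; nra.
Qed.

End EuclideanNorm.

Section Coordinates.
Variables (R : realType) (n : nat).

Definition coord_vec (i : nat) : 'cV[R]_n := \col_(k < n) ((k : nat) == i)%:R.

Lemma xc_mulmx (z : 'rV[R]_n) i : xc z i = (z *m coord_vec i) 0 0.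
Proof.
rewrite /xc mxE; case: (ltnP i n) => [lt_in|le_ni].
  rewrite (nth_map (Ordinal lt_in)) ?size_enum_ord //.
  rewrite (nth_ord_enum (Ordinal lt_in) (Ordinal lt_in)).
  rewrite (bigD1 (Ordinal lt_in)) //= mxE eqxx mulr1 big1 ?addr0 // => k nk.
  rewrite mxE; case: eqP => [ki|]; last by rewrite mulr0.
  by case/eqP: nk; apply: val_inj.
rewrite nth_default; last by rewrite size_map size_enum_ord.
by rewrite big1 // => k _; rewrite mxE (ltn_eqF (leq_trans (ltn_ord k) le_ni)) mulr0.
Qed.

Lemma xc_ord (z : 'rV[R]_n) (i : 'I_n) : xc z i = z 0 i.
Proof.
rewrite xc_mulmx mxE (bigD1 i) //= mxE eqxx mulr1 big1 ?addr0 // => k nk.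
by rewrite mxE (negbTE (nk : (k : nat) != i)) mulr0.
Qed.

End Coordinates.

Section MinFrobeniusLagrange.
Variables (R : realType) (n p : nat) (y : 'I_p.+1 -> 'rV[R]_n).
Variables (aL : 'I_p.+1 -> 'cV[R]_(n.+1)) (aQ : 'I_p.+1 -> 'cV[R]_(nQ n)).
Hypothesis y_poised : mfn_poised y.
Hypothesis lagr_coeffs : forall j, mfn_lagrange_coeffs y j (aL j) (aQ j).

(* First-order optimality of the minimum-norm problem: perturb along the kernel. *)
Lemma lagr_coeffsQ_orth j bL bQ :
  ML y *m bL + MQ y *m bQ = 0 -> dot (aQ j) bQ = 0.
Proof.
move=> hom; have [feas opt] := lagr_coeffs j.
have min_t t : dot (aQ j) (aQ j) <= dot (aQ j + t *: bQ) (aQ j + t *: bQ).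
  have feas_t : ML y *m (aL j + t *: bL) + MQ y *m (aQ j + t *: bQ) = delta_mx j 0.
    by rewrite !mulmxDr -!scalemxAr addrACA feas -scalerDr hom scaler0 addr0.
  by have := opt _ _ feas_t; rewrite !enorm_cV_sq; lra.
set s := dot (aQ j) bQ; set N := dot bQ bQ.
have N0 : 0 <= N by exact: dot_ge0.
have := min_t (- s / (N + 1)).
rewrite dotDl !dotDr !dotZl !dotZr (dotC bQ (aQ j)) -/s -/N.
set t := - s / (N + 1) => le_t.
have tN : t * (N + 1) = - s by rewrite /t divfK // gt_eqF // ltr_wpDl.
by nra.
Qed.

Lemma ML_mulmx_eq0 (v : 'cV[R]_(n.+1)) : ML y *m v = 0 -> v = 0.
Proof.
move=> Mv0; set K := block_mx (MQ y *m (MQ y)^T) (ML y) (ML y)^T (0 : 'M[R]_(n.+1)).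
have : K *m col_mx 0 v = 0 by rewrite mul_block_col !mulmx0 mul0mx Mv0 !addr0 col_mx0.
move=> /(congr1 (mulmx (invmx K))); rewrite mulKmx // mulmx0.
by move=> /eqP; rewrite col_mx_eq0 => /andP [_ /eqP].
Qed.

(* The minimum-norm solution is the unique solution whose quadratic part is
   orthogonal to the kernel, hence it depends linearly on the right-hand side. *)
Lemma lagr_coeffs_lincomb (C : 'cV[R]_(p.+1)) bL bQ :
  ML y *m bL + MQ y *m bQ = C ->
  (forall hL hQ, ML y *m hL + MQ y *m hQ = 0 -> dot bQ hQ = 0) ->
  \sum_j C j 0 *: aL j = bL /\ \sum_j C j 0 *: aQ j = bQ.
Proof.
move=> bC b_orth; set BL := \sum_j C j 0 *: aL j; set BQ := \sum_j C j 0 *: aQ j.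
have BC : ML y *m BL + MQ y *m BQ = C.
  rewrite !mulmx_sumr -big_split /= -[RHS]sum_delta_col.
  by apply: eq_bigr => j _; rewrite -!scalemxAr -scalerDr; case: (lagr_coeffs j) => ->.
have hom : ML y *m (BL - bL) + MQ y *m (BQ - bQ) = 0.
  by rewrite !mulmxBr addrACA -opprD BC bC subrr.
have B_orth : dot BQ (BQ - bQ) = 0.
  by rewrite dot_suml big1 // => j _; rewrite dotZl (lagr_coeffsQ_orth j hom) mulr0.
have BQb : BQ - bQ = 0.
  by apply: dot_eq0; rewrite dotBl B_orth (b_orth _ _ hom) subrr.
split; last by apply/eqP; rewrite -subr_eq0 BQb.
apply/eqP; rewrite -subr_eq0; apply/eqP/ML_mulmx_eq0.
by move: hom; rewrite BQb mulmx0 addr0.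
Qed.

Lemma lagr_eval_lincomb (c : 'I_p.+1 -> R) z :
  lagr_eval (\sum_j c j *: aL j) (\sum_j c j *: aQ j) z =
  \sum_j c j * lagr_eval (aL j) (aQ j) z.
Proof.
rewrite /lagr_eval !mulmx_sumr !summxE -big_split; apply: eq_bigr => j _.
by rewrite -!scalemxAr !mxE mulrDr.
Qed.

Definition lagr_vec (z : 'rV[R]_n) : 'cV[R]_(p.+1) :=
  \col_j lagr_eval (aL j) (aQ j) z.

Lemma ML_tr_lagr_vec z : (ML y)^T *m lagr_vec z = (phiL z)^T.
Proof.
apply/matrixP => k l; rewrite (ord1 l) mxE [RHS]mxE.
set C := ML y *m delta_mx k (0 : 'I_1).
have feas : ML y *m delta_mx k 0 + MQ y *m (0 : 'cV[R]_(nQ n)) = C.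
  by rewrite mulmx0 addr0.
have [CL CQ] := lagr_coeffs_lincomb feas (fun hL hQ _ => dot0l hQ).
have := lagr_eval_lincomb (fun j => C j 0) z.
rewrite CL CQ /lagr_eval mulmx0 [X in _ + X]mxE addr0 mulmx_delta_col => ->.
by apply: eq_bigr => j _; rewrite mulmx_delta_col [(ML y)^T k j]mxE [lagr_vec z j 0]mxE.
Qed.

Lemma lambda_sol_lagr_vec z : lambda_sol y z (lagr_vec z).
Proof.
split; first exact: ML_tr_lagr_vec.
move=> mu MLmu; rewrite !enorm_cV_sq ler_pM2r ?invr_gt0 //.
set d := mu - lagr_vec z.
have MLd : (ML y)^T *m d = 0 by rewrite mulmxBr MLmu ML_tr_lagr_vec subrr.
set a := (MQ y)^T *m lagr_vec z - (phiQ z)^T.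
have -> : (MQ y)^T *m mu - (phiQ z)^T = a + (MQ y)^T *m d.
  by rewrite /a /d mulmxBr [RHS]addrC [RHS]addrA subrK.
apply: dot_pythagoras.
set C := MQ y *m ((MQ y)^T *m d).
have feas : ML y *m 0 + MQ y *m ((MQ y)^T *m d) = C by rewrite mulmx0 add0r.
have orth hL hQ : ML y *m hL + MQ y *m hQ = 0 -> dot ((MQ y)^T *m d) hQ = 0.
  move=> hom; rewrite dot_mulmxl trmxK.
  have -> : MQ y *m hQ = - (ML y *m hL) by apply/eqP; rewrite -addr_eq0 addrC hom.
  by rewrite dotNr dotC dot_mulmxl dotC MLd dot0l oppr0.
have [CL CQ] := lagr_coeffs_lincomb feas orth.
have phiQd : (phiQ z *m ((MQ y)^T *m d)) 0 0 = \sum_j C j 0 * lagr_eval (aL j) (aQ j) z.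
  by rewrite -lagr_eval_lincomb CL CQ /lagr_eval mulmx0 [X in X + _]mxE add0r.
rewrite /a dotBr -dot_mulmxl -/C dotE.
under eq_bigr => j _ do rewrite [lagr_vec z j 0]mxE.
rewrite -phiQd dotE mxE; apply/eqP; rewrite subr_eq0; apply/eqP.
by apply: eq_bigr => k _; rewrite [(phiQ z)^T k 0]mxE mulrC.
Qed.

Lemma lagr_eval_le_Lambda Lam (B : set 'rV[R]_n) z j :
  mfn_Lambda_poised y Lam B -> B z -> `|lagr_eval (aL j) (aQ j) z| <= Lam.
Proof.
move=> [_ lam_le] Bz; apply: le_trans (lam_le z Bz _ (lambda_sol_lagr_vec z)).
have -> : lagr_eval (aL j) (aQ j) z = lagr_vec z j 0 by rewrite mxE.
exact: (le_bigmax 0 (fun i => `|lagr_vec z i 0|) j).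
Qed.

Lemma lagr_eval_nodes i j : lagr_eval (aL j) (aQ j) (y i) = (i == j)%:R.
Proof.
have [feas _] := lagr_coeffs j.
have := congr1 (fun M : 'cV[R]_(p.+1) => M i 0) feas.
rewrite !mxE eqxx andbT => <-.
by rewrite /lagr_eval !mxE; congr (_ + _); apply: eq_bigr => k _; rewrite !mxE.
Qed.

Lemma lagr_sum_affine z c (b : 'cV[R]_n) :
  \sum_j lagr_eval (aL j) (aQ j) z * (c + (y j *m b) 0 0) = c + (z *m b) 0 0.
Proof.
have phiL_k k : \sum_j lagr_eval (aL j) (aQ j) z * phiL (y j) 0 k = phiL z 0 k.
  have := congr1 (fun M : 'cV[R]_(n.+1) => M k 0) (ML_tr_lagr_vec z).
  by rewrite mxE [RHS]mxE => <-; apply: eq_bigr => j _; rewrite !mxE mulrC.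
have sum1 : \sum_j lagr_eval (aL j) (aQ j) z = 1.
  have := phiL_k ord0; rewrite [RHS]mxE /= => <-.
  by apply: eq_bigr => j _; rewrite mxE /= mulr1.
have sum_coord (i : 'I_n) : \sum_j lagr_eval (aL j) (aQ j) z * y j 0 i = z 0 i.
  have := phiL_k (lift ord0 i); rewrite [RHS]mxE /= xc_ord => <-.
  by apply: eq_bigr => j _; rewrite mxE /= xc_ord.
under eq_bigr => j _ do rewrite mulrDr.
rewrite big_split /= -mulr_suml sum1 mul1r; congr (_ + _).
rewrite mxE; under eq_bigr => j _ do rewrite mxE mulr_sumr.
rewrite exchange_big /=; apply: eq_bigr => i _.
by rewrite -sum_coord mulr_suml; apply: eq_bigr => j _; ring.
Qed.

End MinFrobeniusLagrange.

Section QuadraticFunctions.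
Variables (R : realType) (n : nat).

Definition quadf (c : R) (b : 'cV[R]_n) (S : 'M[R]_n) (z : 'rV[R]_n) : R :=
  c + (z *m b) 0 0 + (z *m S *m z^T) 0 0.

Definition is_quad (q : 'rV[R]_n -> R) := exists c b S, q =1 quadf c b S.

Lemma quad_ext (q q' : 'rV[R]_n -> R) : q =1 q' -> is_quad q -> is_quad q'.
Proof. by move=> qq' [c [b [S qE]]]; exists c, b, S => z; rewrite -qq'. Qed.

Lemma quad_cst (c : R) : is_quad (fun _ => c).
Proof. by exists c, 0, 0 => z; rewrite /quadf !mulmx0 mul0mx !mxE !addr0. Qed.

Lemma quad_lin (b : 'cV[R]_n) : is_quad (fun z => (z *m b) 0 0).
Proof. by exists 0, b, 0 => z; rewrite /quadf mulmx0 mul0mx !mxE add0r addr0. Qed.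

Lemma quad_mul_lin (b b' : 'cV[R]_n) :
  is_quad (fun z => (z *m b) 0 0 * (z *m b') 0 0).
Proof.
exists 0, 0, (b *m b'^T) => z; rewrite /quadf mulmx0 zeromx_ij !add0r.
by rewrite mulmxA -mulmxA -trmx_mul [RHS]mxE big_ord1 [(_^T) 0 0]mxE.
Qed.

Lemma quad_add (q q' : 'rV[R]_n -> R) :
  is_quad q -> is_quad q' -> is_quad (fun z => q z + q' z).
Proof.
move=> [c [b [S qE]]] [c' [b' [S' q'E]]]; exists (c + c'), (b + b'), (S + S') => z.
by rewrite qE q'E /quadf !mulmxDr !mulmxDl !addmx_ij; ring.
Qed.

Lemma quad_scale (t : R) (q : 'rV[R]_n -> R) : is_quad q -> is_quad (fun z => t * q z).
Proof.
move=> [c [b [S qE]]]; exists (t * c), (t *: b), (t *: S) => z.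
by rewrite qE /quadf -!scalemxAr -scalemxAl !scalemx_ij; ring.
Qed.

Lemma quad_sum (I : Type) (r : seq I) (F : I -> 'rV[R]_n -> R) :
  (forall i, is_quad (F i)) -> is_quad (fun z => \sum_(i <- r) F i z).
Proof.
move=> Fq; elim: r => [|i r IHr].
  by apply: quad_ext (quad_cst 0) => z; rewrite big_nil.
by apply: quad_ext (quad_add (Fq i) IHr) => z; rewrite big_cons.
Qed.

Lemma quad_phiL (k : 'I_n.+1) : is_quad (fun z => phiL z 0 k).
Proof.
have : is_quad (fun z => if k == 0 :> nat then 1 else xc z k.-1).
  case: (k == 0 :> nat); first exact: quad_cst.
  by apply: quad_ext (quad_lin (coord_vec R n k.-1)) => z; rewrite xc_mulmx.
by apply: quad_ext => z; rewrite mxE.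
Qed.

Definition phiQ_entry (ij : nat * nat) (z : 'rV[R]_n) : R :=
  if ij.1 == ij.2 then xc z ij.1 ^+ 2 / 2 else xc z ij.1 * xc z ij.2.

Definition phiQ_index : seq (nat * nat) :=
  flatten [seq [seq (i, j) | j <- iota i (n - i)] | i <- iota 0 n].

Lemma phiQ_seqE z : phiQ_seq z = [seq phiQ_entry ij z | ij <- phiQ_index].
Proof.
rewrite /phiQ_seq /phiQ_index map_flatten -map_comp; congr flatten.
by apply: eq_map => i /=; rewrite -map_comp.
Qed.

Lemma quad_phiQ_entry ij : is_quad (phiQ_entry ij).
Proof.
have quad_xc2 i j : is_quad (fun z => xc z i * xc z j).
  by apply: quad_ext (quad_mul_lin (coord_vec R n i) (coord_vec R n j)) => z; rewrite !xc_mulmx.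
rewrite /phiQ_entry; case: (ij.1 == ij.2); last exact: quad_xc2.
by apply: quad_ext (quad_scale 2^-1 (quad_xc2 ij.1 ij.1)) => z; rewrite expr2 mulrC.
Qed.

Lemma quad_phiQ (k : 'I_(nQ n)) : is_quad (fun z => phiQ z 0 k).
Proof.
have : is_quad (fun z => nth 0 [seq phiQ_entry ij z | ij <- phiQ_index] k).
  elim: phiQ_index (k : nat) => [|ij s IHs] [|k'] /=; try exact: quad_cst.
    exact: quad_phiQ_entry.
  exact: IHs.
by apply: quad_ext => z; rewrite mxE phiQ_seqE.
Qed.

Lemma quad_lagr_eval (aL : 'cV[R]_n.+1) (aQ : 'cV[R]_(nQ n)) : is_quad (lagr_eval aL aQ).
Proof.
have qL := quad_sum (index_enum 'I_n.+1) (fun k => quad_scale (aL k 0) (quad_phiL k)).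
have qQ := quad_sum (index_enum 'I_(nQ n)) (fun k => quad_scale (aQ k 0) (quad_phiQ k)).
apply: quad_ext (quad_add qL qQ) => z.
rewrite /lagr_eval [(phiL z *m aL) 0 0]mxE [(phiQ z *m aQ) 0 0]mxE.
by congr (_ + _); apply: eq_bigr => k _; rewrite mulrC.
Qed.

End QuadraticFunctions.

Lemma lim_dnbhs0_affine (R : realType) (g : R -> R) (A B : R) :
  (forall h, h != 0 -> g h = A + h * B) -> lim (g @ 0^') = A.
Proof.
move=> gE; apply: cvg_lim => //.
have : (fun h : R => A + h * B) @ 0^' --> A + 0 * B.
  by apply: cvgD; [exact: cvg_cst | apply: cvgM; [exact: nbhs_dnbhs | exact: cvg_cst]].
rewrite mul0r addr0; apply: cvg_trans; apply: near_eq_cvg; near=> h.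
by rewrite gE //; near: h; exact: nbhs_dnbhs_neq.
Unshelve. all: by end_near.
Qed.

Section SecondDifference.
Variables (R : realType) (n : nat).

Definition D2 (q : 'rV[R]_n -> R) z u := q (z + u) + q (z - u) - 2 * q z.

Lemma quadf_shift c b (S : 'M[R]_n) z v h :
  quadf c b S (h *: v + z) = quadf c b S z +
    h * ((v *m b) 0 0 + (z *m S *m v^T) 0 0 + (v *m S *m z^T) 0 0) +
    h ^+ 2 * (v *m S *m v^T) 0 0.
Proof.
rewrite /quadf linearD linearZ /= !mulmxDl !mulmxDr -!scalemxAl -!scalemxAr.
by rewrite !addmx_ij !scalemx_ij; ring.
Qed.

Lemma derive_quadf c b (S : 'M[R]_n) z v :
  'D_v (quadf c b S) z = (v *m b) 0 0 + (z *m S *m v^T) 0 0 + (v *m S *m z^T) 0 0.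
Proof.
apply: (lim_dnbhs0_affine (B := (v *m S *m v^T) 0 0)) => h h0 /=.
rewrite quadf_shift [_ *: _]/(_ * _).
have field_id (Q A C : R) : h^-1 * (Q + h * A + h ^+ 2 * C - Q) = A + h * C.
  by field.
exact: field_id.
Qed.

Lemma derive_quadf_fun c b (S : 'M[R]_n) v :
  (fun z => 'D_v (quadf c b S) z) = quadf ((v *m b) 0 0) (S *m v^T + (v *m S)^T) 0.
Proof.
apply: funext => z; rewrite derive_quadf /quadf mulmx0 mul0mx zeromx_ij addr0.
rewrite mulmxDr addmx_ij mulmxA.
have -> : (v *m S *m z^T) 0 0 = (z *m (v *m S)^T) 0 0.
  by rewrite -[v *m S *m z^T]trmxK trmx_mul trmxK mxE.
by ring.
Qed.

Lemma evec_form (A : 'M[R]_n) i j : (evec R i *m A *m (evec R j)^T) 0 0 = A i j.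
Proof. by rewrite /evec trmx_delta mulmx_delta_col -rowE mxE. Qed.

Lemma hessian_quadf c b (S : 'M[R]_n) x : hessian (quadf c b S) x = S + S^T.
Proof.
apply/matrixP => i j; rewrite mxE derive_quadf_fun derive_quadf.
rewrite !mulmx0 !mul0mx !zeromx_ij !addr0 mulmxDr addmx_ij mulmxA evec_form.
by rewrite trmx_mul mulmxA evec_form !mxE addrC.
Qed.

Lemma D2_quadf c b (S : 'M[R]_n) z u : D2 (quadf c b S) z u = 2 * (u *m S *m u^T) 0 0.
Proof.
rewrite /D2.
have -> : z + u = 1 *: u + z by rewrite scale1r addrC.
have -> : z - u = (-1) *: u + z by rewrite scaleN1r addrC.
by rewrite !quadf_shift; ring.
Qed.

Lemma quad_D2_hessian (q : 'rV[R]_n -> R) : is_quad q -> exists S : 'M[R]_n,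
  (forall z u, D2 q z u = 2 * (u *m S *m u^T) 0 0) /\ (forall x, hessian q x = S + S^T).
Proof.
move=> [c [b [S qE]]]; have -> : q = quadf c b S by apply: funext.
by exists S; split => *; [exact: D2_quadf | exact: hessian_quadf].
Qed.

Lemma hessian_quad_sym (q : 'rV[R]_n -> R) x : is_quad q -> (hessian q x)^T = hessian q x.
Proof. by move=> /quad_D2_hessian [S [_ ->]]; rewrite raddfD /= trmxK addrC. Qed.

Lemma hessian_quad_form (q : 'rV[R]_n -> R) x z (a : 'cV[R]_n) :
  is_quad q -> (a^T *m hessian q x *m a) 0 0 = D2 q z a^T.
Proof.
move=> /quad_D2_hessian [S [-> ->]]; rewrite trmxK mulmxDr mulmxDl addmx_ij.
have -> : (a^T *m S^T *m a) 0 0 = (a^T *m S *m a) 0 0.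
  have trK (M : 'M[R]_1) : M 0 0 = M^T 0 0 by rewrite mxE.
  by rewrite [LHS]trK !trmx_mul !trmxK mulmxA.
by ring.
Qed.

Lemma D2_quad_scale (q : 'rV[R]_n -> R) z t u :
  is_quad q -> D2 q z (t *: u) = t ^+ 2 * D2 q z u.
Proof.
move=> /quad_D2_hessian [S [D2E _]]; rewrite !D2E linearZ /= -scalemxAl -scalemxAr.
by rewrite -scalemxAl !scalemx_ij; ring.
Qed.

Lemma D2_sum (I : finType) (q : I -> 'rV[R]_n -> R) (g : I -> R) z u :
  D2 (fun w => \sum_j q j w * g j) z u = \sum_j D2 (q j) z u * g j.
Proof. by rewrite /D2 mulr_sumr -big_split -sumrB /=; apply: eq_bigr => j _; ring. Qed.

Lemma quad_D2_le (q : 'rV[R]_n -> R) (c : 'rV[R]_n) d Lam : is_quad q -> 0 < d ->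
  (forall z, cball c d z -> `|q z| <= Lam) ->
  forall u, `|D2 q c u| <= 4 * Lam * enorm u ^+ 2 / d ^+ 2.
Proof.
move=> qq d_gt0 q_le u.
have cc : cball c d c by rewrite /cball /= subrr enorm0 ltW.
have [u0|u_neq0] := eqVneq (enorm u) 0.
  rewrite u0 (enorm_rV_eq0 u0) expr0n /= mulr0 mul0r /D2 addr0 subr0.
  by rewrite (_ : q c + q c - 2 * q c = 0) ?normr0 //; ring.
set e := enorm u; have e_gt0 : 0 < e by rewrite lt_def u_neq0 enorm_ge0.
set t := d / e; have te : t * e = d by rewrite /t divfK.
have t_gt0 : 0 < t by rewrite /t divr_gt0.
have c_plus : cball c d (c + t *: u).
  by rewrite /cball /= (addrC c) addrK enorm_scale gtr0_norm // te.
have c_minus : cball c d (c - t *: u).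
  by rewrite /cball /= addrAC subrr add0r -scaleNr enorm_scale normrN gtr0_norm // te.
have D2t : `|D2 q c (t *: u)| <= 4 * Lam.
  rewrite /D2; move: (q_le _ cc) (q_le _ c_plus) (q_le _ c_minus).
  by move=> /ler_normlP [? ?] /ler_normlP [? ?] /ler_normlP [? ?]; apply/ler_normlP; split; lra.
rewrite D2_quad_scale // normrM normrX gtr0_norm // in D2t.
rewrite ler_pdivlMr ?exprn_gt0 // -te exprMn.
by have := normr_ge0 (D2 q c u); nra.
Qed.

End SecondDifference.

Section FirstOrderTaylor.
Variables (R : realType) (n : nat).

Lemma derive_grad (f : 'rV[R]_n -> R) w v :
  differentiable f w -> 'D_v f w = (v *m (grad f w)^T) 0 0.
Proof.
move=> df; rewrite deriveE // [v in LHS]matrix_sum_delta big_ord1 linear_sum mxE.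
by apply: eq_bigr => j _; rewrite linearZ /= -deriveE // !mxE (ord1 _).
Qed.

Lemma derive_along_line (f : 'rV[R]_n -> R) a d s :
  differentiable f (a + s *: d) ->
  is_derive s 1 (fun t => f (a + t *: d)) ('D_d f (a + s *: d)).
Proof.
move=> df.
have quotE : (fun h : R => h^-1 *: (((fun t => f (a + t *: d)) \o shift s) (h *: 1)
                 - f (a + s *: d))) =
             (fun h : R => h^-1 *: ((f \o shift (a + s *: d)) (h *: d) - f (a + s *: d))).
  apply: funext => h /=; congr (_ *: (f _ - _)).
  by rewrite [h *: 1]mulr1 scalerDl addrCA addrA.
by apply: DeriveDef; rewrite /derivable ?/derive quotE //; exact: diff_derivable.
Qed.

Lemma taylor_remainder_le (f : 'rV[R]_n -> R) (X : set 'rV[R]_n) L a z :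
  0 <= L -> (forall x, X x -> differentiable f x) ->
  (forall x w, X x -> X w -> enorm (grad f x - grad f w) <= L * enorm (x - w)) ->
  (forall s : R, 0 <= s <= 1 -> X (a + s *: (z - a))) ->
  `|f z - f a - ((z - a) *m (grad f a)^T) 0 0| <= L * enorm (z - a) ^+ 2.
Proof.
move=> L0 f_diff grad_lip seg; set d := z - a; set phi := fun t : R => f (a + t *: d).
have in01 (s : R) : s \in `]0, 1[ -> 0 <= s <= 1.
  by rewrite in_itv /= => /andP [? ?]; rewrite !ltW.
have phi' (s : R) : 0 <= s <= 1 -> is_derive s 1 phi ('D_d f (a + s *: d)).
  by move=> s01; apply/derive_along_line/f_diff/seg.
have phi_cont : {within `[0, 1], continuous phi}.
  apply: derivable_within_continuous => s; rewrite in_itv /= => s01.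
  by have [] := phi' s s01.
have [c c01 mvt] := MVT ltr01 (fun s s01 => phi' s (in01 s s01)) phi_cont.
have c01' := in01 c c01; have [c0 c1] := andP c01'.
have ad : a + d = z by rewrite /d addrC subrK.
rewrite /phi scale1r scale0r addr0 ad subr0 mulr1 in mvt.
rewrite derive_grad in mvt; last exact/f_diff/seg.
have -> : f z - f a - (d *m (grad f a)^T) 0 0 =
          (d *m (grad f (a + c *: d) - grad f a)^T) 0 0.
  by rewrite mvt [(_ - _)^T]raddfB mulmxBr addmx_ij oppmx_ij.
apply: le_trans (enorm_CauchySchwarz _ _) _.
have Xa : X a by move: (seg 0); rewrite scale0r addr0 lexx ler01; apply.
have := grad_lip _ _ (seg c c01') Xa.
rewrite addrAC subrr add0r enorm_scale ger0_norm // => lip.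
have e0 := enorm_ge0 d; apply: le_trans (ler_wpM2l e0 lip) _.
by have := mulr_ge0 L0 (mulr_ge0 e0 e0); nra.
Qed.

End FirstOrderTaylor.

Lemma cball_segment (R : realType) n (a z : 'rV[R]_n) d s :
  cball a d z -> 0 <= s <= 1 -> cball a d (a + s *: (z - a)).
Proof.
rewrite /cball /= addrAC subrr add0r enorm_scale => az /andP [s0 s1].
by rewrite ger0_norm //; have := enorm_ge0 (z - a); nra.
Qed.

Lemma lipschitz_ge0 (R : realType) n (X : set 'rV[R]_n) (F : 'rV[R]_n -> 'rV[R]_n) L x z :
  (forall x z, X x -> X z -> enorm (F x - F z) <= L * enorm (x - z)) ->
  X x -> X z -> x != z -> 0 <= L.
Proof.
move=> F_lip Xx Xz xz; have := le_trans (enorm_ge0 _) (F_lip _ _ Xx Xz).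
rewrite pmulr_lge0 // lt_def enorm_ge0 andbT.
by apply: contra xz => /eqP /enorm_rV_eq0 /eqP; rewrite subr_eq0.
Qed.

Lemma lipschitz_ge0_ball (R : realType) n (X : set 'rV[R]_n) (F : 'rV[R]_n -> 'rV[R]_n)
    L (a : 'rV[R]_n) d :
  (0 < n)%N -> 0 < d -> cball a d `<=` X ->
  (forall x z, X x -> X z -> enorm (F x - F z) <= L * enorm (x - z)) -> 0 <= L.
Proof.
move=> n_gt0 d_gt0 ballX F_lip; set e := evec R (Ordinal n_gt0).
have aa : cball a d a by rewrite /cball /= subrr enorm0 ltW.
have ae : cball a d (a + d *: e).
  by rewrite /cball /= addrC addKr enorm_scale enorm_evec mulr1 gtr0_norm.
apply: (lipschitz_ge0 F_lip (ballX _ ae) (ballX _ aa)).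
rewrite -subr_eq0 addrC addKr scaler_eq0 negb_or gt_eqF //=.
apply/eqP => e0; have := enorm_evec R (Ordinal n_gt0).
by rewrite -/e e0 enorm0 => /eqP; rewrite eq_sym oner_eq0.
Qed.

Section RelaxedModel.
Variables (R : realType) (n p : nat) (y : 'I_p.+1 -> 'rV[R]_n).
Variables (aL : 'I_p.+1 -> 'cV[R]_(n.+1)) (aQ : 'I_p.+1 -> 'cV[R]_(nQ n)).
Variable gamma : 'I_p.+1 -> R.
Hypothesis y_poised : mfn_poised y.
Hypothesis lagr_coeffs : forall j, mfn_lagrange_coeffs y j (aL j) (aQ j).

Definition mfn_model (z : 'rV[R]_n) : R := \sum_j lagr_eval (aL j) (aQ j) z * gamma j.

Lemma quad_mfn_model : is_quad mfn_model.
Proof.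
have qsum := quad_sum (index_enum _) (fun j => quad_scale (gamma j) (quad_lagr_eval (aL j) (aQ j))).
by apply: quad_ext qsum => z; apply: eq_bigr => j _; rewrite mulrC.
Qed.

Lemma mfn_model_nodes i : mfn_model (y i) = gamma i.
Proof.
rewrite /mfn_model (bigD1 i) //= (lagr_eval_nodes lagr_coeffs) eqxx mul1r.
rewrite big1 ?addr0 // => j ji.
by rewrite (lagr_eval_nodes lagr_coeffs) eq_sym (negbTE ji) mul0r.
Qed.

Lemma D2_mfn_model c (b : 'cV[R]_n) z u :
  D2 mfn_model z u =
  \sum_j (gamma j - (c + (y j *m b) 0 0)) * D2 (lagr_eval (aL j) (aQ j)) z u.
Proof.
have D2_affine : \sum_j D2 (lagr_eval (aL j) (aQ j)) z u * (c + (y j *m b) 0 0) = 0.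
  rewrite -D2_sum /D2 !(lagr_sum_affine y_poised lagr_coeffs).
  by rewrite mulmxDl mulmxBl !addmx_ij oppmx_ij; ring.
rewrite /mfn_model D2_sum; under [RHS]eq_bigr => j _ do rewrite mulrBl.
rewrite sumrB; under [X in _ - X]eq_bigr => j _ do rewrite mulrC.
by rewrite D2_affine subr0; apply: eq_bigr => j _; rewrite mulrC.
Qed.

Lemma opnorm_hessian_mfn_model_le (a : 'rV[R]_n) delta Lam c (b : 'cV[R]_n) r x :
  0 < delta -> 0 <= r -> mfn_Lambda_poised y Lam (cball a delta) ->
  (forall j, `|gamma j - (c + (y j *m b) 0 0)| <= r) ->
  opnorm (hessian mfn_model x) <= p.+1%:R * (r * (4 * Lam / delta ^+ 2)).
Proof.
move=> delta_gt0 r0 y_Lam res_le.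
have aa : cball a delta a by rewrite /cball /= subrr enorm0 ltW.
have Lam0 : 0 <= Lam.
  exact: le_trans (normr_ge0 _) (lagr_eval_le_Lambda y_poised lagr_coeffs ord0 y_Lam aa).
have D2l_le j (v : 'rV[R]_n) :
    `|D2 (lagr_eval (aL j) (aQ j)) a v| <= 4 * Lam * enorm v ^+ 2 / delta ^+ 2.
  apply: (quad_D2_le (quad_lagr_eval (aL j) (aQ j)) delta_gt0) => z az.
  exact: (lagr_eval_le_Lambda y_poised lagr_coeffs j y_Lam az).
apply: opnorm_sym_le; first exact/hessian_quad_sym/quad_mfn_model.
  by rewrite !mulr_ge0 // invr_ge0 exprn_ge0 // ltW.
move=> v; rewrite /dot mulmxA (hessian_quad_form _ a _ quad_mfn_model).
rewrite (D2_mfn_model c b); apply: le_trans (ler_norm_sum _ _ _) _.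
have -> : p.+1%:R * (r * (4 * Lam / delta ^+ 2)) * dot v v =
    \sum_(j < p.+1) r * (4 * Lam * enorm v^T ^+ 2 / delta ^+ 2).
  by rewrite sumr_const card_ord -mulr_natl enorm_rV_sq trmxK; ring.
apply: ler_sum => j _; rewrite normrM.
by apply: ler_pM; rewrite ?normr_ge0 ?res_le ?D2l_le.
Qed.

End RelaxedModel.

Lemma taylor_residual_le (R : realType) n (f : 'rV[R]_n -> R) (X : set 'rV[R]_n)
    L kappa delta a z (g : R) :
  0 <= L -> (forall x, X x -> differentiable f x) ->
  (forall x w, X x -> X w -> enorm (grad f x - grad f w) <= L * enorm (x - w)) ->
  cball a delta `<=` X -> cball a delta z -> `|g - f z| <= kappa * delta ^+ 2 ->
  `|g - (f a + ((z - a) *m (grad f a)^T) 0 0)| <= (kappa + L) * delta ^+ 2.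
Proof.
move=> L0 f_diff grad_lip ballX az gz.
have := taylor_remainder_le L0 f_diff grad_lip (fun s s01 => ballX _ (cball_segment az s01)).
have za : L * enorm (z - a) ^+ 2 <= L * delta ^+ 2.
  by rewrite ler_wpM2l // ler_sqr ?nnegrE ?enorm_ge0 // (le_trans (enorm_ge0 _) az).
set T := ((z - a) *m _) 0 0 => rem.
have -> : g - (f a + T) = (g - f z) + (f z - f a - T) by ring.
by apply: le_trans (ler_normD _ _) _; lra.
Qed.

Lemma cdelta_gt0 (R : realType) (dmax : R) : 0 < dmax -> 0 < cdelta dmax.
Proof. by move=> dmax_gt0; rewrite !lt_min ltr01 !invr_gt0 dmax_gt0 exprn_gt0. Qed.

Lemma cdelta_le1 (R : realType) (dmax : R) : cdelta dmax <= 1.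
Proof. by rewrite ge_min lexx. Qed.

Lemma model_constant_le (R : realType) (kappa L Lam dmax : R) (p q : nat) :
  0 <= kappa -> 0 <= L -> 0 <= Lam -> 0 < dmax -> (0 < q)%N ->
  (kappa + L) * (4 * Lam * p.+1%:R) <=
  (kappa + L / 2) * (4 * Lam * p.+1%:R * Num.sqrt (2 * q.+1%:R)) / cdelta dmax ^+ 2.
Proof.
move=> kappa0 L0 Lam0 dmax_gt0 q_gt0.
set A := 4 * Lam * p.+1%:R; set s := Num.sqrt _; set c := cdelta dmax.
have A0 : 0 <= A by rewrite !mulr_ge0.
have s2 : 2 <= s.
  rewrite -[X in X <= _](@ger0_norm _ 2) // -sqrtr_sqr /s ler_wsqrtr //.
  by rewrite expr2 ler_wpM2l // ler_nat ltnS.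
have c2_gt0 : 0 < c ^+ 2 by rewrite exprn_gt0 // cdelta_gt0.
have c2_le1 : c ^+ 2 <= 1 by rewrite expr_le1 ?cdelta_le1 // ltW // cdelta_gt0.
have KA0 : 0 <= (kappa + L) * A by rewrite mulr_ge0 // addr_ge0.
rewrite ler_pdivlMr //; apply: le_trans (_ : (kappa + L) * A <= _).
  by rewrite ler_piMr.
rewrite mulrC [X in _ <= X]mulrCA ler_wpM2l //.
by nra.
Qed.

Unset Implicit Arguments.
Theorem theorem3 (R : realType) (n p : nat) (f : 'rV[R]_n -> R)
    (L : R) (X : set 'rV[R]_n) (delta deltamax Lam kappa : R)
    (y : 'I_p.+1 -> 'rV[R]_n)
    (alphaL : 'I_p.+1 -> 'cV[R]_(n.+1)) (alphaQ : 'I_p.+1 -> 'cV[R]_(nQ n))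
    (gamma : 'I_p.+1 -> R) :
  open X -> bounded_set X ->
  (forall x, X x -> differentiable f x) ->
  (forall x z, X x -> X z -> enorm (grad f x - grad f z) <= L * enorm (x - z)) ->
  (n < p)%N -> (p < qdim n)%N ->
  0 < delta ->
  cball (y ord0) delta `<=` X ->
  (forall i, cball (y ord0) delta (y i)) ->
  mfn_poised y ->
  0 < Lam ->
  mfn_Lambda_poised y Lam (cball (y ord0) delta) ->
  0 < deltamax -> delta <= deltamax ->
  0 <= kappa ->
  (forall j, mfn_lagrange_coeffs y j (alphaL j) (alphaQ j)) ->
  (forall i, `| \sum_j lagr_eval (alphaL j) (alphaQ j) (y i) * gamma j - f (y i) |
               <= kappa * delta ^+ 2) ->
  forall x : 'rV[R]_n,
    opnorm (hessian (fun z => \sum_j lagr_eval (alphaL j) (alphaQ j) z * gamma j) x)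
      <= (kappa + L / 2) *
         (4 * Lam * p.+1%:R * Num.sqrt (2 * (qdim n).+1%:R)) / (cdelta deltamax) ^+ 2.
Proof.
move=> _ _ f_diff grad_lip _ lt_pq delta_gt0 ballX y_ball y_poised Lam_gt0 y_Lam
  dmax_gt0 _ kappa0 lagr_coeffs interp x.
set y0 := y ord0; set G := (grad f y0)^T.
have n_gt0 : (0 < n)%N by move: lt_pq; case: (n).
have L0 : 0 <= L := lipschitz_ge0_ball n_gt0 delta_gt0 ballX grad_lip.
have res j : `|gamma j - (f y0 - (y0 *m G) 0 0 + (y j *m G) 0 0)| <= (kappa + L) * delta ^+ 2.
  have -> : f y0 - (y0 *m G) 0 0 + (y j *m G) 0 0 = f y0 + ((y j - y0) *m G) 0 0.
    by rewrite mulmxBl addmx_ij oppmx_ij; ring.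
  apply: taylor_residual_le L0 f_diff grad_lip ballX (y_ball j) _.
  by rewrite -(mfn_model_nodes gamma lagr_coeffs j); exact: interp.
apply: le_trans (opnorm_hessian_mfn_model_le y_poised lagr_coeffs x delta_gt0 _ y_Lam res) _.
  by rewrite mulr_ge0 // ?addr_ge0 // ?sqr_ge0.
have -> : p.+1%:R * ((kappa + L) * delta ^+ 2 * (4 * Lam / delta ^+ 2)) =
          (kappa + L) * (4 * Lam * p.+1%:R) by field; rewrite gt_eqF.
exact: model_constant_le (ltW Lam_gt0) dmax_gt0 (leq_ltn_trans (leq0n p) lt_pq).
Qed.
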